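(* Let $M$ be a finitely generated $\mathbb{Z}[\sigma]$-submodule of $\mathbb{Q}[\sigma]$, and let $\tilde M$ be the union of all $\mathbb{Z}[\sigma]$-submodules $N$ of $\mathbb{Q}[\sigma]$ with $M\subseteq N$ and $N/M$ finite. Then $\tilde M$ is generated by one element as a $\mathbb{Z}[\sigma]$-module.
   Context: $\mathbb{Q}[\sigma]$ is the polynomial ring over $\mathbb{Q}$ in an indeterminate $\sigma$, viewed as a module over $\mathbb{Z}[\sigma]$ by multiplication. *)

From HB Require Import structures.
From mathcomp Require Import all_boot all_order all_algebra.
Set Implicit Arguments. Unset Strict Implicit. Unset Printing Implicit Defensive.
Import Order.TTheory GRing.Theory Num.Theory.
Local Open Scope ring_scope.

(* Q[sigma] = {poly rat}; Z[sigma] = {poly int}, acting on Q[sigma] by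
   multiplication after the canonical embedding Z[sigma] -> Q[sigma]. *)
Definition zact (a : {poly int}) (p : {poly rat}) : {poly rat} :=
  map_poly (fun z : int => z%:~R) a * p.

Definition is_zsubmodule (N : {poly rat} -> Prop) : Prop :=
  [/\ N 0,
      (forall x y, N x -> N y -> N (x + y)) &
      (forall (a : {poly int}) x, N x -> N (zact a x))].

Definition zspan (s : seq {poly rat}) (p : {poly rat}) : Prop :=
  exists c : 'I_(size s) -> {poly int}, p = \sum_(i < size s) zact (c i) s`_i.

Definition zfinitely_generated (M : {poly rat} -> Prop) : Prop :=
  exists s : seq {poly rat}, forall p, M p <-> zspan s p.

Definition finite_quotient (M N : {poly rat} -> Prop) : Prop :=
  exists r : seq {poly rat}, forall n, N n -> exists2 x, x \in r & M (n - x).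

Definition saturation (M : {poly rat} -> Prop) (p : {poly rat}) : Prop :=
  exists N : {poly rat} -> Prop,
    [/\ is_zsubmodule N, (forall x, M x -> N x), finite_quotient M N & N p].

Definition zcyclic (N : {poly rat} -> Prop) : Prop :=
  exists g : {poly rat}, forall p, N p <-> exists a : {poly int}, p = zact a g.

From HB Require Import structures.
From mathcomp Require Import all_boot all_order all_algebra.
From mathcomp Require Import ring.
From Stdlib Require Import Classical ClassicalEpsilon.
Set Implicit Arguments. Unset Strict Implicit. Unset Printing Implicit Defensive.
Import Order.TTheory GRing.Theory Num.Theory.
Local Open Scope ring_scope.

(* Clearing denominators in a Bezout relation for the gcd of the generators
   writes M = H J with H in Q[sigma] and J an ideal of Z[sigma] containing a
   positive integer c.  Dividing J by the primes p | c for which J lies in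
   p Z[sigma], we get J inside g Z[sigma] with g c' and g F in J for some
   c' > 0 and some monic F: for every other p, J + p Z[sigma] contains a monic
   polynomial (drop leading terms divisible by p, then use Bezout on the
   leading coefficient), and these glue multiplicatively into one modulo c.
   Put gamma = g H.  Then M lies in Z[sigma] gamma, whose quotient by M is a
   quotient of Z[sigma]/(c', F), which is finite; so Z[sigma] gamma lies in the
   saturation.  Conversely, if N/M is finite and p is in N, pigeonhole gives
   n p and (sigma^b - sigma^a) p in M with n <> 0 and a < b; as sigma^b - sigma^a
   is monic, dividing by it in Z[sigma] shows p is in Z[sigma] gamma. *)

Local Notation inQ := (map_poly (fun z : int => z%:~R) : {poly int} -> {poly rat}).

Lemma zactD a b x : zact a x + zact b x = zact (a + b) x.
Proof. by rewrite /zact rmorphD mulrDl. Qed.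

Lemma zactB a b x : zact a x - zact b x = zact (a - b) x.
Proof. by rewrite /zact rmorphB mulrBl. Qed.

Lemma zactM a b x : zact a (zact b x) = zact (a * b) x.
Proof. by rewrite /zact rmorphM mulrA. Qed.

Lemma inQ_nat (c : nat) : inQ c%:Z%:P = c%:R%:P.
Proof. by rewrite map_polyC /= pmulrn. Qed.

Lemma zact_nat (c : nat) x : zact c%:Z%:P x = c%:R%:P * x.
Proof. by rewrite /zact inQ_nat. Qed.

Lemma zsubmoduleB N x y : is_zsubmodule N -> N x -> N y -> N (x - y).
Proof.
move=> [_ ND NZ] Nx Ny; apply: ND => //.
by have := NZ (-1) y Ny; rewrite /zact rmorphN rmorph1 mulN1r.
Qed.

Lemma zsubmodule_zmultiples g : is_zsubmodule (fun x => exists a, x = zact a g).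
Proof.
split.
- by exists 0; rewrite /zact rmorph0 mul0r.
- by move=> _ _ [a ->] [b ->]; exists (a + b); rewrite zactD.
- by move=> a _ [b ->]; exists (a * b); rewrite zactM.
Qed.

Lemma size_sub_lead_coef (R : nzRingType) (f : {poly R}) :
  (size (f - (lead_coef f)%:P * 'X^((size f).-1))%R <= (size f).-1)%N.
Proof.
apply/leq_sizeP => j le_d_j; rewrite coefB coefCM coefXn.
case: (ltngtP j (size f).-1) => [|lt_d_j|->]; first by rewrite ltnNge le_d_j.
  by rewrite mulr0 subr0 nth_default //; move: lt_d_j; case: (size f).
by rewrite mulr1 lead_coefE subrr.
Qed.

Lemma dvdz_coefs_polyC (p : int) (x : {poly int}) :
  (forall i, (p %| x`_i)%Z) -> exists q, x = p%:P * q.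
Proof.
move=> dvd_x; exists (\poly_(i < size x) (x`_i %/ p)%Z); apply/polyP => i.
rewrite coefCM coef_poly; case: ltnP => [_|le_x_i]; last by rewrite mulr0 nth_default.
by rewrite mulrC divzK.
Qed.

Lemma modn_lead_coef_ndvd (p : nat) (f : {poly int}) :
  (exists i, ~~ (p%:Z %| f`_i)%Z) ->
  exists f' h, f = f' + p%:Z%:P * h /\ ~~ (p%:Z %| lead_coef f')%Z.
Proof.
elim: {f}(size f) {-2}f (leqnn (size f)) => [|n IH] f size_f [i ndvd_i].
  by move: size_f ndvd_i; rewrite size_poly_leq0 => /eqP->; rewrite coef0 dvdz0.
have [/dvdzP[k l_eq]|ndvd_l] := boolP (p%:Z %| lead_coef f)%Z; last first.
  by exists f, 0; rewrite mulr0 addr0.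
set d := (size f).-1.
have size_tail : (size (f - (lead_coef f)%:P * 'X^d)%R <= n)%N.
  by apply: leq_trans (size_sub_lead_coef f) _; move: size_f; rewrite /d; case: (size f).
have tail_ndvd : exists i, ~~ (p%:Z %| (f - (lead_coef f)%:P * 'X^d)`_i)%Z.
  exists i; rewrite coefB coefCM coefXn.
  have [i_d|] := eqVneq i d; last by rewrite mulr0 subr0.
  by move: ndvd_i; rewrite i_d -lead_coefE l_eq dvdz_mull.
have [f' [h [tail_eq ndvd']]] := IH _ size_tail tail_ndvd.
exists f', (h + k%:P * 'X^d); split => //.
by rewrite -[LHS](subrK ((lead_coef f)%:P * 'X^d)) tail_eq l_eq polyCM; ring.
Qed.

Lemma monic_mul_inQ (q B : {poly int}) (h : {poly rat}) :
  q \is monic -> inQ q * h = inQ B -> exists h', h = inQ h'.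
Proof.
move=> mon_q qh_eq; exists (Pdiv.Ring.rdivp B q); apply/eqP; rewrite -subr_eq0.
apply: contraT => nz.
have size_rem := Pdiv.Ring.ltn_rmodpN0 B (monic_neq0 mon_q).
have : inQ q * (h - inQ (Pdiv.Ring.rdivp B q)) = inQ (Pdiv.Ring.rmodp B q).
  by rewrite mulrBr qh_eq {1}(Pdiv.RingMonic.rdivp_eq mon_q B) rmorphD rmorphM /=; ring.
move=> /(congr1 (fun p : {poly rat} => size p)) /=; rewrite size_monicM ?monic_map ?nz //.
have size_nz : (0 < size (h - inQ (Pdiv.Ring.rdivp B q))%R)%N by rewrite size_poly_gt0.
rewrite !size_map_inj_poly //; try exact: intr_inj.
by move=> size_eq; move: size_rem; rewrite -size_eq -subn1 -addnBA // ltnNge leq_addr.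
Qed.

Lemma residue_mod_nat_monic (c : nat) (F : {poly int}) (b : {poly int}) :
  F \is monic -> exists (t : {ffun 'I_(size F).-1 -> 'I_c.+1}) (Q R : {poly int}),
    b = Q * F + R * c.+1%:Z%:P + \sum_(i < (size F).-1) (t i)%:Z%:P * 'X^i.
Proof.
move=> mon_F; set k := (size F).-1.
set r := Pdiv.Ring.rmodp b F.
have size_r : (size r <= k)%N.
  have := Pdiv.Ring.ltn_rmodpN0 b (monic_neq0 mon_F); rewrite -/r /k.
  by case: (size F).
have mod_lt i : (absz (r`_i %% c.+1%:Z)%Z < c.+1)%N.
  by rewrite -ltz_nat gez0_abs ?modz_ge0 ?ltz_pmod.
pose rem := \poly_(i < k) (r`_i %% c.+1%:Z)%Z.
pose quo := \poly_(i < k) (r`_i %/ c.+1%:Z)%Z.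
have r_eq : r = quo * c.+1%:Z%:P + rem.
  apply/polyP => i; rewrite coefD coefMC !coef_poly; case: ltnP => [_|le_k_i].
    exact: divz_eq.
  by rewrite mul0r addr0 nth_default // (leq_trans size_r).
exists [ffun i : 'I_k => inord (absz (r`_i %% c.+1%:Z)%Z)], (Pdiv.Ring.rdivp b F), quo.
rewrite {1}(Pdiv.RingMonic.rdivp_eq mon_F b) -/r {1}r_eq addrA /rem poly_def.
congr (_ + _); apply: eq_bigr => i _.
by rewrite mul_polyC ffunE inordK // gez0_abs ?modz_ge0.
Qed.

Definition is_ideal (J : {poly int} -> Prop) : Prop :=
  [/\ J 0, (forall x y, J x -> J y -> J (x + y)) & (forall a x, J x -> J (a * x))].

Lemma zsubmodule_preimage_ideal M H :
  is_zsubmodule M -> is_ideal (fun x => M (zact x H)).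
Proof.
move=> [M0 MD MZ]; split.
- by rewrite /zact rmorph0 mul0r.
- by move=> x y Mx My; rewrite -zactD; apply: MD.
- by move=> a x Mx; rewrite -zactM; apply: MZ.
Qed.

Definition in_ideal_modn (J : {poly int} -> Prop) (n : nat) (f : {poly int}) : Prop :=
  exists g, J (f - n%:Z%:P * g).

Definition has_monic_modn (J : {poly int} -> Prop) (n : nat) : Prop :=
  exists2 f, f \is monic & in_ideal_modn J n f.

Lemma lead_coef_coprime_has_monic_modn J (p : nat) f :
  is_ideal J -> prime p -> ~~ (p%:Z %| lead_coef f)%Z -> in_ideal_modn J p f ->
  has_monic_modn J p.
Proof.
move=> [_ _ JM] p_pr ndvd [g Jfg].
set d := (size f).-1; set l := lead_coef f.
have size_tail := size_sub_lead_coef f.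
have [[u v] /= Bezout] : exists uv : int * int, uv.1 * l + uv.2 * p%:Z = 1.
  have /coprimezP[uv <-] : coprimez l p%:Z.
    by rewrite coprimezE coprime_sym prime_coprime.
  by exists uv.
(* With u l + v p = 1, X^d + u (f - l X^d) is monic and congruent to u f modulo p. *)
exists ('X^d + u%:P * (f - l%:P * 'X^d)).
  apply/monicP; rewrite lead_coefDl ?lead_coefXn // size_polyXn ltnS.
  by rewrite mul_polyC (leq_trans (size_scale_leq _ _)).
exists (v%:P * 'X^d + u%:P * g).
have -> : 'X^d + u%:P * (f - l%:P * 'X^d) - p%:Z%:P * (v%:P * 'X^d + u%:P * g) =
   u%:P * (f - p%:Z%:P * g) + (1 - (u * l + v * p%:Z))%:P * 'X^d.
  by rewrite polyCB polyCD !polyCM; ring.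
by rewrite Bezout subrr mul0r addr0; apply: JM.
Qed.

Lemma has_monic_modn_prime J (p : nat) f :
  is_ideal J -> prime p -> J f -> (exists i, ~~ (p%:Z %| f`_i)%Z) ->
  has_monic_modn J p.
Proof.
move=> idJ p_pr Jf /modn_lead_coef_ndvd[f' [h [f_eq ndvd]]].
apply: (lead_coef_coprime_has_monic_modn idJ p_pr ndvd).
by exists (- h); rewrite mulrN opprK -f_eq.
Qed.

Lemma has_monic_modnM J (m n : nat) : is_ideal J ->
  has_monic_modn J m -> has_monic_modn J n -> has_monic_modn J (m * n).
Proof.
move=> [_ JD JM] [f mon_f [g Jfg]] [f' mon_f' [g' Jfg']].
exists (f * f'); first by rewrite monicMl.
exists (g * g').
have -> : f * f' - (m * n)%N%:Z%:P * (g * g') =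
    f' * (f - m%:Z%:P * g) + (m%:Z%:P * g) * (f' - n%:Z%:P * g').
  by rewrite PoszM polyCM; ring.
by apply: JD; apply: JM.
Qed.

Lemma has_monic_modn_primes J (n : nat) : is_ideal J -> (0 < n)%N ->
  (forall p, prime p -> (p %| n)%N -> has_monic_modn J p) -> has_monic_modn J n.
Proof.
move=> idJ; elim/ltn_ind: n => n IH n_gt0 monic_p.
have [n_gt1|n_le1] := ltnP 1 n; last first.
  have -> : n = 1%N by apply/anti_leq; rewrite n_le1.
  by case: idJ => J0 _ _; exists 1; [exact: monic1 | exists 1; rewrite mulr1 subrr].
have [pdiv_pr pdiv_dvd] := (pdiv_prime n_gt1, pdiv_dvd n).
rewrite -(divnK pdiv_dvd) mulnC; apply: has_monic_modnM => //; first exact: monic_p.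
apply: IH; first by rewrite ltn_Pdiv // prime_gt1.
  by rewrite divn_gt0 ?pdiv_gt0 // dvdn_leq.
move=> q q_pr q_dvd; apply: monic_p => //; apply: dvdn_trans q_dvd _.
exact: dvdn_div.
Qed.

Lemma has_monic_modn_in_ideal J (n : nat) : is_ideal J -> J n%:Z%:P ->
  has_monic_modn J n -> exists2 f, f \is monic & J f.
Proof.
move=> [_ JD JM] Jn [f mon_f [g Jfg]]; exists f => //.
have -> : f = (f - n%:Z%:P * g) + g * n%:Z%:P by ring.
by apply: JD => //; apply: JM.
Qed.

Lemma ideal_has_monic J (c : nat) : is_ideal J -> (0 < c)%N -> J c%:Z%:P ->
  (forall p, prime p -> (p %| c)%N -> exists2 x, J x & exists i, ~~ (p%:Z %| x`_i)%Z) ->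
  exists2 F, F \is monic & J F.
Proof.
move=> idJ c_gt0 Jc nz_modp; apply: (has_monic_modn_in_ideal idJ Jc).
apply: (has_monic_modn_primes idJ c_gt0) => p p_pr p_dvd.
have [x Jx nz_x] := nz_modp p p_pr p_dvd.
exact: has_monic_modn_prime idJ p_pr Jx nz_x.
Qed.

Lemma ideal_nat_monic J (c : nat) : is_ideal J -> (0 < c)%N -> J c%:Z%:P ->
  exists (g : int) (c' : nat) (F : {poly int}), [/\ (0 < c')%N, F \is monic,
    (forall x, J x -> exists r, x = g%:P * r), J (g%:P * c'%:Z%:P) & J (g%:P * F)].
Proof.
elim/ltn_ind: c J => c IH J idJ c_gt0 Jc.
have [[p [p_pr p_dvd J_p]] | no_p] := classic (exists p, [/\ prime p, (p %| c)%N &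
    forall x i, J x -> (p%:Z %| x`_i)%Z]); last first.
  have [F mon_F JF] : exists2 F, F \is monic & J F.
    apply: (ideal_has_monic idJ c_gt0 Jc) => p p_pr p_dvd.
    apply: NNPP => J_p; apply: no_p; exists p; split => // x i Jx.
    by apply: NNPP => /negP ndvd; apply: J_p; exists x => //; exists i.
  exists 1, c, F; rewrite !mul1r; split => // x _.
  by exists x; rewrite mul1r.
pose Jp x := J (p%:Z%:P * x).
have idJp : is_ideal Jp.
  case: idJ => J0 JD JM; split; rewrite /Jp; first by rewrite mulr0.
    by move=> x y Jx Jy; rewrite mulrDr; apply: JD.
  by move=> a x Jx; rewrite mulrCA; apply: JM.
have Jp_c : Jp (c %/ p)%N%:Z%:P by rewrite /Jp -polyCM -PoszM mulnC divnK.
have lt_cp : (c %/ p < c)%N by rewrite ltn_Pdiv // prime_gt1.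
have cp_gt0 : (0 < c %/ p)%N by rewrite divn_gt0 ?prime_gt0 // dvdn_leq.
have [g [c' [F [c'_gt0 mon_F Jp_g Jp_c' Jp_F]]]] := IH _ lt_cp Jp idJp cp_gt0 Jp_c.
exists (p%:Z * g), c', F; rewrite polyCM -!mulrA; split => // x Jx.
have [q x_eq] := dvdz_coefs_polyC (fun i => J_p x i Jx).
have [r q_eq] : exists r, q = g%:P * r by apply: Jp_g; rewrite /Jp -x_eq.
by exists r; rewrite x_eq q_eq !mulrA.
Qed.

Lemma finite_quotient_pigeonhole M N (v : nat -> {poly rat}) :
  is_zsubmodule M -> finite_quotient M N -> (forall i, N (v i)) ->
  exists i j, (i < j)%N /\ M (v j - v i).
Proof.
move=> subM [r rep_r] Nv.
have rep i : {x | x \in r /\ M (v i - x)}.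
  apply: constructive_indefinite_description.
  by have [x ? ?] := rep_r _ (Nv i); exists x.
pose f i := sval (rep i).
have M_f i : M (v i - f i) by rewrite /f; case: (rep i) => ? [].
have sub_r : {subset map f (iota 0 (size r).+1) <= r}.
  by move=> _ /mapP[i _ ->]; rewrite /f; case: (rep i) => ? [].
have : ~~ uniq (map f (iota 0 (size r).+1)).
  by apply/negP => /uniq_leq_size/(_ sub_r); rewrite size_map size_iota ltnn.
case/(uniqPn 0) => i [j [lt_ij]]; rewrite size_map size_iota => lt_j.
rewrite !(nth_map 0%N) ?size_iota ?(ltn_trans lt_ij) // !nth_iota ?(ltn_trans lt_ij) //.
rewrite !add0n => fij; exists i, j; split => //.
have -> : v j - v i = (v j - f j) - (v i - f i) by rewrite fij; ring.
exact: zsubmoduleB.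
Qed.

Lemma finite_quotient_zmultiples M g (c : nat) F :
  is_zsubmodule M -> (0 < c)%N -> F \is monic ->
  M (zact c%:Z%:P g) -> M (zact F g) ->
  finite_quotient M (fun x => exists b, x = zact b g).
Proof.
move=> [_ MD MZ]; case: c => // c _ mon_F Mc MF.
pose rep (t : {ffun 'I_(size F).-1 -> 'I_c.+1}) :=
  zact (\sum_(i < (size F).-1) (t i)%:Z%:P * 'X^i) g.
exists [seq rep t | t : {ffun 'I_(size F).-1 -> 'I_c.+1}] => _ [b ->].
have [t [Q [R ->]]] := residue_mod_nat_monic c b mon_F.
exists (rep t); first by apply/imageP; exists t.
by rewrite /rep zactB addrK -zactD -!zactM; apply: MD; apply: MZ.
Qed.

Lemma zact_cancel_monic (g p : {poly rat}) (n : int) (q A B : {poly int}) :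
  n != 0 -> q \is monic -> zact n%:P p = zact A g -> zact q p = zact B g ->
  exists h, p = zact h g.
Proof.
rewrite /zact map_polyC /= => nz_n mon_q nA qB.
pose h0 := (n%:~R^-1 : rat)%:P * inQ A.
have p_eq : p = h0 * g.
  by rewrite -mulrA -nA mulrA -polyCM mulVf ?intr_eq0 // mul1r.
have [g0 | nz_g] := eqVneq g 0; first by exists 0; rewrite p_eq g0 !mulr0.
have [h h0_eq] : exists h, h0 = inQ h.
  by apply: (@monic_mul_inQ q B _ mon_q); apply: (mulIf nz_g); rewrite -mulrA -p_eq.
by exists h; rewrite p_eq h0_eq.
Qed.

Lemma zcyclic_saturation M g (c : nat) F :
  is_zsubmodule M -> (0 < c)%N -> F \is monic ->
  (forall m, M m -> exists r, m = zact r g) ->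
  M (zact c%:Z%:P g) -> M (zact F g) -> zcyclic (saturation M).
Proof.
move=> subM c_gt0 mon_F M_g Mc MF; exists g => p; split; last first.
  move=> [a ->]; exists (fun x => exists b, x = zact b g); split.
  - exact: zsubmodule_zmultiples.
  - exact: M_g.
  - exact: finite_quotient_zmultiples subM c_gt0 mon_F Mc MF.
  - by exists a.
move=> [N [[_ _ NZ] _ fqN Np]].
have [i [j [lt_ij]]] := finite_quotient_pigeonhole (v := fun k => zact k%:Z%:P p)
  subM fqN (fun k => NZ _ _ Np).
rewrite zactB -polyCB => /M_g[A nA].
have [a [b [lt_ab]]] := finite_quotient_pigeonhole (v := fun k => zact 'X^k p)
  subM fqN (fun k => NZ _ _ Np).
rewrite zactB => /M_g[B qB].
apply: (zact_cancel_monic _ _ nA qB).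
  by rewrite subr_eq0 eqz_nat gtn_eqF.
by apply/monicP; rewrite lead_coefDl ?lead_coefXn // size_polyN !size_polyXn ltnS.
Qed.

Lemma gcdp_seq_bezout (s : seq {poly rat}) :
  exists G, (forall i, (i < size s)%N -> G %| s`_i) /\
    exists u : 'I_(size s) -> {poly rat}, G = \sum_(i < size s) u i * s`_i.
Proof.
elim: s => [|x s [G [G_dvd [u G_eq]]]].
  by exists 0; split => //; exists (fun _ => 0); rewrite big_ord0.
pose e := egcdp x G.
have dvd_gcd : e.1 * x + e.2 * G %| gcdp x G by rewrite -(eqp_dvdl _ (egcdpE x G)).
exists (e.1 * x + e.2 * G); split.
  case=> [|i] /= lt_i; first exact: dvdp_trans dvd_gcd (dvdp_gcdl _ _).
  by apply: dvdp_trans dvd_gcd (dvdp_trans (dvdp_gcdr _ _) (G_dvd i lt_i)).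
exists (fun i : 'I_(size s).+1 => if unlift ord0 i is Some j then e.2 * u j else e.1).
rewrite big_ord_recl /= unlift_none G_eq mulr_sumr; congr (_ + _).
by apply: eq_bigr => i _; rewrite liftK mulrA.
Qed.

Lemma clear_denominator (p : {poly rat}) :
  exists2 d : nat, (0 < d)%N & exists q, d%:R%:P * p = inQ q.
Proof.
elim/poly_ind: p => [|p c [d d_gt0 [q dp_eq]]].
  by exists 1%N => //; exists 0; rewrite mulr0 rmorph0.
have den_eq : (absz (denq c))%:Z = denq c by rewrite gez0_abs // ltW ?denq_gt0.
exists (d * absz (denq c))%N; first by rewrite muln_gt0 d_gt0 absz_gt0 denq_neq0.
exists ((absz (denq c))%:Z%:P * q * 'X + (d%:Z * numq c)%:P).
rewrite rmorphD !rmorphM /= map_polyX !map_polyC /= -dp_eq den_eq.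
by rewrite !pmulrn den_eq numqE !polyCM; ring.
Qed.

Lemma clear_denominators n (f : 'I_n -> {poly rat}) :
  exists2 d : nat, (0 < d)%N &
    exists a : 'I_n -> {poly int}, forall i, d%:R%:P * f i = inQ (a i).
Proof.
elim: n f => [|n IH] f; first by exists 1%N => //; exists (fun _ => 0); case.
have [d1 d1_gt0 [a1 a1_eq]] := IH (fun i => f (lift ord0 i)).
have [d0 d0_gt0 [a0 a0_eq]] := clear_denominator (f ord0).
exists (d0 * d1)%N; first by rewrite muln_gt0 d0_gt0.
exists (fun i => if unlift ord0 i is Some j then d0%:Z%:P * a1 j else d1%:Z%:P * a0).
move=> i; case: unliftP => [j ->|->]; rewrite natrM polyCM rmorphM /= inQ_nat.
  by rewrite -a1_eq; ring.
by rewrite -a0_eq; ring.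
Qed.

Lemma zfinitely_generated_scaled_ideal M : zfinitely_generated M ->
  exists H (c : nat), [/\ (0 < c)%N, M (zact c%:Z%:P H) &
    forall m, M m -> exists x, m = zact x H].
Proof.
move=> [s span_s].
have [G [G_dvd [u G_eq]]] := gcdp_seq_bezout s.
have [D D_gt0 [a Da]] := clear_denominators u.
have [E E_gt0 [T ET]] := clear_denominators (fun i : 'I_(size s) => s`_i %/ G).
pose H := E%:R^-1%:P * G.
have HE : E%:R%:P * H = G by rewrite mulrA -polyCM mulfV ?pnatr_eq0 -?lt0n // mul1r.
have s_eq (i : 'I_(size s)) : s`_i = zact (T i) H.
  by rewrite /zact -ET mulrAC HE mulrC divpK // G_dvd.
exists H, (D * E)%N; split; first by rewrite muln_gt0 D_gt0.
  rewrite zact_nat natrM polyCM -mulrA HE.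
  apply/span_s; exists a; rewrite G_eq mulr_sumr; apply: eq_bigr => i _.
  by rewrite /zact -Da mulrA.
move=> m /span_s[b ->]; exists (\sum_(i < size s) b i * T i).
rewrite /zact rmorph_sum mulr_suml; apply: eq_bigr => i _.
by rewrite s_eq /zact rmorphM mulrA.
Qed.

Theorem lemma7p6 (M : {poly rat} -> Prop) :
  is_zsubmodule M -> zfinitely_generated M -> zcyclic (saturation M).
Proof.
move=> subM fgM.
have [H [c [c_gt0 Mc M_H]]] := zfinitely_generated_scaled_ideal fgM.
have [g [c' [F [c'_gt0 mon_F J_g Jc' JF]]]] :=
  ideal_nat_monic (zsubmodule_preimage_ideal H subM) c_gt0 Mc.
apply: (zcyclic_saturation (g := zact g%:P H) subM c'_gt0 mon_F).
- move=> m Mm; have [x m_eq] := M_H m Mm.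
  have [r x_eq] : exists r, x = g%:P * r by apply: J_g; rewrite -m_eq.
  by exists r; rewrite m_eq x_eq zactM mulrC.
- by rewrite zactM mulrC.
- by rewrite zactM mulrC.
Qed.
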